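(* Let $\Sigma\subseteq\mathcal L$ be closed under subformulas and let $\mathcal W=(W,\le,\ell,R)$ be a $\Sigma$-labelled system whose relation $R$ is $\omega$-sensible. Then the relation $R^+_{\mathcal Q}$ of its quotient $\mathcal Q=(W/{\sim},\le_{\mathcal Q},\ell_{\mathcal Q},R^+_{\mathcal Q})$ is $\omega$-sensible; hence $\mathcal Q$ is a $\Sigma$-quasimodel.
   Context: $\mathcal L$: formulas over propositional variables with $\wedge,\vee,\Rightarrow,\Leftarrow$ (co-implication), $\mathsf X,\mathsf Y,\mathsf G,\mathsf H,\mathsf U,\mathsf S$. Let $\Sigma\subseteq\mathcal L$ be closed under subformulas. A $\Sigma$-type is $\Phi\subseteq\Sigma$ such that: for $\varphi\wedge\psi\in\Sigma$, $\varphi\wedge\psi\in\Phi$ iff $\varphi,\psi\in\Phi$; for $\varphi\vee\psi\in\Sigma$, $\varphi\vee\psi\in\Phi$ iff $\varphi\in\Phi$ or $\psi\in\Phi$; for $\varphi\Rightarrow\psi\in\Sigma$, ($\varphi\Rightarrow\psi\in\Phi$ implies $\varphi\notin\Phi$ or $\psi\in\Phi$) and ($\psi\in\Phi$ implies $\varphi\Rightarrow\psi\in\Phi$); for $\varphi\Leftarrow\psi\in\Sigma$, ($\varphi\Leftarrow\psi\in\Phi$ implies $\varphi\in\Phi$) and ($\varphi\in\Phi,\psi\notin\Phi$ implies $\varphi\Leftarrow\psi\in\Phi$). A poset is locally linear if it is a disjoint union of linear posets; write $a\lessgtr b$ if $a\le b$ or $b\le a$. A $\Sigma$-labelled space is $(W,\le,\ell)$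 with $(W,\le)$ locally linear, $\ell\colon W\to$ $\Sigma$-types, $w\le v\Rightarrow\ell(w)\supseteq\ell(v)$, such that whenever $\varphi\Rightarrow\psi\in\Sigma\setminus\ell(w)$ there is $v\le w$ with $\varphi\in\ell(v)$, $\psi\notin\ell(v)$, and whenever $\varphi\Leftarrow\psi\in\ell(w)$ there is $v\ge w$ with $\varphi\in\ell(v)$, $\psi\notin\ell(v)$. A relation $R\subseteq W\times W$ is convex if every image set and every preimage set of a point is convex in $\le$; fully confluent if (forth–down) $x\le x'Ry'$ implies $xRy\le y'$ for some $y$; (forth–up) $x'\ge xRy$ implies $x'Ry'\ge y$ for some $y'$; (back–down) $x'Ry'\ge y$ implies $x'\ge xRy$ for some $x$; (back–up) $xRy\le y'$ implies $x\le x'Ry'$ for some $x'$; bi-serial if every point has an $R$-successor and an $R$-predecessor. A pair $(\Phi,\Psi)$ of $\Sigma$-types is sensible if for formulas in $\Sigma$: $\mathsf X\varphi\in\Phi\iff\varphi\in\Psi$; $\mathsf Y\varphi\in\Psi\iff\varphi\in\Phi$; $\mathsf G\varphi\in\Phi\iff(\varphi\in\Phi\wedge\mathsf G\varphi\in\Psi)$; $\mathsf H\varphi\in\Psi\iff(\varphi\in\Psi\wedge\mathsf H\varphi\in\Phi)$; $\varphi\,\mathsf U\,\psi\in\Phi\iff(\psi\in\Phi$ or ($\varphi\in\Phi$ and $\varphi\,\mathsf U\,\psi\in\Psi$)); $\varphi\,\mathsf S\,\psi\in\Psi\iff(\psi\in\Psi$ or ($\varphi\in\Psi$ and $\varphi\,\mathsf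 S\,\psi\in\Phi$)). $R$ is sensible if $wRv$ implies $(\ell(w),\ell(v))$ sensible. $R$ is $\omega$-sensible if: $\mathsf G\varphi\in\Sigma\setminus\ell(w)$ implies some $v$ with $wR^nv$ ($n\ge0$) and $\varphi\notin\ell(v)$; $\mathsf H\varphi\in\Sigma\setminus\ell(w)$ implies some $v$ with $vR^nw$ and $\varphi\notin\ell(v)$; $\varphi\,\mathsf U\,\psi\in\ell(w)$ implies some $v$ with $wR^nv$ and $\psi\in\ell(v)$; $\varphi\,\mathsf S\,\psi\in\ell(w)$ implies some $v$ with $vR^nw$ and $\psi\in\ell(v)$. A $\Sigma$-labelled system is a $\Sigma$-labelled space with a bi-serial, fully confluent, convex, sensible relation; a $\Sigma$-quasimodel is a $\Sigma$-labelled system whose relation is $\omega$-sensible. Quotient: $L(w)=\{\ell(v): v\lessgtr w\}$; $w\sim v$ iff $\ell(w)=\ell(v)$ and $L(w)=L(v)$; $[w]\le_{\mathcal Q}[v]$ iff $L(w)=L(v)$ and $\ell(w)\supseteq\ell(v)$; $\ell_{\mathcal Q}([w])=\ell(w)$; $R_{\mathcal Q}$ is the smallest relation with $wRv\Rightarrow[w]R_{\mathcal Q}[v]$; $XR^+_{\mathcal Q}Y$ iff there are $X_1\le_{\mathcal Q}X\le_{\mathcal Q}X_2$, $Y_1\le_{\mathcal Q}Y\le_{\mathcal Q}Y_2$ with $X_2R_{\mathcal Q}Y_1$ and $X_1R_{\mathcal Q}Y_2$. *)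

From Stdlib Require Import Arith.

Set Implicit Arguments.

Inductive form : Type :=
| Var : nat -> form
| And : form -> form -> form
| Or : form -> form -> form
| Imp : form -> form -> form
| Coimp : form -> form -> form
| Next : form -> form
| Prev : form -> form
| Glob : form -> form
| Hist : form -> form
| Until : form -> form -> form
| Since : form -> form -> form.

Definition fset := form -> Prop.

Definition subformula_closed (Sigma : fset) : Prop :=
  (forall a b, Sigma (And a b) -> Sigma a /\ Sigma b) /\
  (forall a b, Sigma (Or a b) -> Sigma a /\ Sigma b) /\
  (forall a b, Sigma (Imp a b) -> Sigma a /\ Sigma b) /\
  (forall a b, Sigma (Coimp a b) -> Sigma a /\ Sigma b) /\
  (forall a, Sigma (Next a) -> Sigma a) /\
  (forall a, Sigma (Prev a) -> Sigma a) /\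
  (forall a, Sigma (Glob a) -> Sigma a) /\
  (forall a, Sigma (Hist a) -> Sigma a) /\
  (forall a b, Sigma (Until a b) -> Sigma a /\ Sigma b) /\
  (forall a b, Sigma (Since a b) -> Sigma a /\ Sigma b).

Definition sigma_type (Sigma : fset) (Phi : fset) : Prop :=
  (forall a, Phi a -> Sigma a) /\
  (forall a b, Sigma (And a b) -> (Phi (And a b) <-> Phi a /\ Phi b)) /\
  (forall a b, Sigma (Or a b) -> (Phi (Or a b) <-> Phi a \/ Phi b)) /\
  (forall a b, Sigma (Imp a b) ->
     (Phi (Imp a b) -> ~ Phi a \/ Phi b) /\ (Phi b -> Phi (Imp a b))) /\
  (forall a b, Sigma (Coimp a b) ->
     (Phi (Coimp a b) -> Phi a) /\ (Phi a -> ~ Phi b -> Phi (Coimp a b))).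

Definition partial_order (W : Type) (le : W -> W -> Prop) : Prop :=
  (forall x, le x x) /\
  (forall x y, le x y -> le y x -> x = y) /\
  (forall x y z, le x y -> le y z -> le x z).

(** Locally linear: a disjoint union of linear posets, i.e. there is a
    partition of W (an equivalence relation E) such that each block is
    linearly ordered and elements of distinct blocks are incomparable. *)
Definition locally_linear (W : Type) (le : W -> W -> Prop) : Prop :=
  partial_order le /\
  exists E : W -> W -> Prop,
    (forall x, E x x) /\ (forall x y, E x y -> E y x) /\
    (forall x y z, E x y -> E y z -> E x z) /\
    (forall x y, E x y -> le x y \/ le y x) /\
    (forall x y, le x y -> E x y).

Definition comparable (W : Type) (le : W -> W -> Prop) (a b : W) : Prop :=
  le a b \/ le b a.

Definition labelled_space (Sigma : fset) (W : Type) (le : W -> W -> Prop)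
  (lab : W -> fset) : Prop :=
  locally_linear le /\
  (forall w, sigma_type Sigma (lab w)) /\
  (forall w v, le w v -> forall a, lab v a -> lab w a) /\
  (forall w a b, Sigma (Imp a b) -> ~ lab w (Imp a b) ->
     exists v, le v w /\ lab v a /\ ~ lab v b) /\
  (forall w a b, lab w (Coimp a b) ->
     exists v, le w v /\ lab v a /\ ~ lab v b).

Definition convex_set (W : Type) (le : W -> W -> Prop) (A : W -> Prop) : Prop :=
  forall x y z, A x -> A z -> le x y -> le y z -> A y.

Definition convex_rel (W : Type) (le R : W -> W -> Prop) : Prop :=
  (forall w, convex_set le (fun v => R w v)) /\
  (forall w, convex_set le (fun v => R v w)).

Definition fully_confluent (W : Type) (le R : W -> W -> Prop) : Prop :=
  (forall x x' y', le x x' -> R x' y' -> exists y, R x y /\ le y y') /\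
  (forall x x' y, le x x' -> R x y -> exists y', R x' y' /\ le y y') /\
  (forall x' y' y, R x' y' -> le y y' -> exists x, le x x' /\ R x y) /\
  (forall x y y', R x y -> le y y' -> exists x', le x x' /\ R x' y').

Definition bi_serial (W : Type) (R : W -> W -> Prop) : Prop :=
  (forall w, exists v, R w v) /\ (forall w, exists v, R v w).

Definition sensible_pair (Sigma : fset) (Phi Psi : fset) : Prop :=
  (forall a, Sigma (Next a) -> (Phi (Next a) <-> Psi a)) /\
  (forall a, Sigma (Prev a) -> (Psi (Prev a) <-> Phi a)) /\
  (forall a, Sigma (Glob a) -> (Phi (Glob a) <-> Phi a /\ Psi (Glob a))) /\
  (forall a, Sigma (Hist a) -> (Psi (Hist a) <-> Psi a /\ Phi (Hist a))) /\
  (forall a b, Sigma (Until a b) ->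
     (Phi (Until a b) <-> Phi b \/ (Phi a /\ Psi (Until a b)))) /\
  (forall a b, Sigma (Since a b) ->
     (Psi (Since a b) <-> Psi b \/ (Psi a /\ Phi (Since a b)))).

Definition sensible_rel (Sigma : fset) (W : Type) (lab : W -> fset)
  (R : W -> W -> Prop) : Prop :=
  forall w v, R w v -> sensible_pair Sigma (lab w) (lab v).

Fixpoint rel_pow (W : Type) (R : W -> W -> Prop) (n : nat) : W -> W -> Prop :=
  match n with
  | O => fun x y => x = y
  | S n' => fun x z => exists y, R x y /\ rel_pow R n' y z
  end.

Definition omega_sensible (Sigma : fset) (W : Type) (lab : W -> fset)
  (R : W -> W -> Prop) : Prop :=
  (forall w a, Sigma (Glob a) -> ~ lab w (Glob a) ->
     exists n v, rel_pow R n w v /\ ~ lab v a) /\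
  (forall w a, Sigma (Hist a) -> ~ lab w (Hist a) ->
     exists n v, rel_pow R n v w /\ ~ lab v a) /\
  (forall w a b, lab w (Until a b) ->
     exists n v, rel_pow R n w v /\ lab v b) /\
  (forall w a b, lab w (Since a b) ->
     exists n v, rel_pow R n v w /\ lab v b).

Definition labelled_system (Sigma : fset) (W : Type) (le : W -> W -> Prop)
  (lab : W -> fset) (R : W -> W -> Prop) : Prop :=
  labelled_space Sigma le lab /\ bi_serial R /\ fully_confluent le R /\
  convex_rel le R /\ sensible_rel Sigma lab R.

Definition quasimodel (Sigma : fset) (W : Type) (le : W -> W -> Prop)
  (lab : W -> fset) (R : W -> W -> Prop) : Prop :=
  labelled_system Sigma le lab R /\ omega_sensible Sigma lab R.

Section Quotient.
Variables (W : Type) (le : W -> W -> Prop) (lab : W -> fset) (R : W -> W -> Prop).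

Definition Lset (w : W) : fset -> Prop :=
  fun Phi => exists v, comparable le v w /\ lab v = Phi.

Definition qequiv (w v : W) : Prop := lab w = lab v /\ Lset w = Lset v.

Definition cls (w : W) : W -> Prop := fun v => qequiv w v.

Definition QW : Type := { X : W -> Prop | exists w, X = cls w }.

Definition qle (X Y : QW) : Prop :=
  exists w v, proj1_sig X = cls w /\ proj1_sig Y = cls v /\
    Lset w = Lset v /\ (forall a, lab v a -> lab w a).

Definition qlab (X : QW) : fset :=
  fun a => exists w, proj1_sig X = cls w /\ lab w a.

Definition qR (X Y : QW) : Prop :=
  exists w v, R w v /\ proj1_sig X = cls w /\ proj1_sig Y = cls v.

Definition qRplus (X Y : QW) : Prop :=
  exists X1 X2 Y1 Y2,
    qle X1 X /\ qle X X2 /\ qle Y1 Y /\ qle Y Y2 /\ qR X2 Y1 /\ qR X1 Y2.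

End Quotient.

From Stdlib Require Import FunctionalExtensionality PropExtensionality ProofIrrelevance.

(** Since
    ≤ is locally linear, L(w) is the set of labels of the linear component of
    w, so the components of ≤_Q are the classes with equal L-part, and a
    ≤_Q-step between classes can be realised by a ≤-step between
    representatives (lemmas [qle_lift_down], [qle_lift_up]).  This makes
    every property of the system transfer to the quotient:
    - order-theoretic properties, by computing on representatives;
    - full confluence, by lifting the four confluence squares;
    - sensibility, because for X R⁺_Q Y forth-confluence yields R-successors
      of representatives of X whose labels bound ℓ_Q(Y) from above and from
      below (and back-confluence does the same for predecessors of Y), which
      pins down every clause of sensibility ([sensible_pair_sandwich]);
    - ω-sensibility, since every R-path maps to an R⁺_Q-path of classes. *)

Set Implicit Arguments.

Definition fsubset (P Q : fset) : Prop := forall a, P a -> Q a.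

Lemma fset_ext (P Q : fset) : (forall a, P a <-> Q a) -> P = Q.
Proof.
  intros H; apply functional_extensionality; intro a.
  apply propositional_extensionality; auto.
Qed.

Definition converse (W : Type) (R : W -> W -> Prop) : W -> W -> Prop :=
  fun x y => R y x.

Definition forth_down (W : Type) (le R : W -> W -> Prop) : Prop :=
  forall x x' y', le x x' -> R x' y' -> exists y, R x y /\ le y y'.

Definition forth_up (W : Type) (le R : W -> W -> Prop) : Prop :=
  forall x x' y, le x x' -> R x y -> exists y', R x' y' /\ le y y'.

Lemma fully_confluent_iff (W : Type) (le R : W -> W -> Prop) :
  fully_confluent le R <->
  forth_down le R /\ forth_up le R /\
  forth_down le (converse R) /\ forth_up le (converse R).
Proof.
  unfold fully_confluent, forth_down, forth_up, converse.
  split; intros [FD [FU [BD BU]]]; repeat split; auto.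
  - intros x x' y' Hx Hr. destruct (BD _ _ _ Hr Hx) as [y [A B]]. eauto.
  - intros x x' y Hx Hr. destruct (BU _ _ _ Hr Hx) as [y' [A B]]. eauto.
  - intros x' y' y Hr Hy. destruct (BD _ _ _ Hy Hr) as [x [A B]]. eauto.
  - intros x y y' Hr Hy. destruct (BU _ _ _ Hy Hr) as [x' [A B]]. eauto.
Qed.

(** A pair (P, Q) is sensible as soon as P has two sensible successors
    C ⊇ Q ⊇ F (this settles the clauses for X, Y, G, U) and Q has two
    sensible predecessors C' ⊇ P ⊇ F' (this settles those for H and S);
    the G- and H-clauses also need P and Q to be reflexive for G and H. *)
Lemma sensible_pair_sandwich (Sigma P Q C F C' F' : fset) :
  (forall a, P (Glob a) -> P a) -> (forall a, Q (Hist a) -> Q a) ->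
  sensible_pair Sigma P C -> fsubset Q C ->
  sensible_pair Sigma P F -> fsubset F Q ->
  sensible_pair Sigma C' Q -> fsubset P C' ->
  sensible_pair Sigma F' Q -> fsubset F' P ->
  sensible_pair Sigma P Q.
Proof.
  intros GP HQ [N1 [Y1 [G1 [H1 [U1 S1]]]]] QC [N2 [Y2 [G2 [H2 [U2 S2]]]]] FQ
         [N3 [Y3 [G3 [H3 [U3 S3]]]]] PC [N4 [Y4 [G4 [H4 [U4 S4]]]]] FP.
  split; [|split; [|split; [|split; [|split]]]].
  5-6: intros a b H. 1-4: intros a H. all: split.
  - intros K. apply FQ, (N2 a H), K.
  - intros K. apply (N1 a H), QC, K.
  - intros K. apply (Y1 a H), QC, K.
  - intros K. apply FQ, (Y2 a H), K.
  - intros K. split; auto. apply FQ. apply (G2 a H) in K. tauto.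
  - intros [K1 K2]. apply (G1 a H). auto.
  - intros K. split; auto. apply FP. apply (H4 a H) in K. tauto.
  - intros [K1 K2]. apply (H3 a H). auto.
  - intros K. apply (U2 a b H) in K. destruct K as [K|[K1 K2]]; auto.
  - intros [K|[K1 K2]]; apply (U1 a b H); auto.
  - intros K. apply (S4 a b H) in K. destruct K as [K|[K1 K2]]; auto.
  - intros [K|[K1 K2]]; apply (S3 a b H); auto.
Qed.

(** In a labelled system G φ ∈ ℓ(w) implies φ ∈ ℓ(w): evaluate the
    G-clause of sensibility at an R-successor of w. *)
Lemma glob_reflexive (Sigma : fset) (W : Type) (le : W -> W -> Prop)
  (lab : W -> fset) (R : W -> W -> Prop) (w : W) (a : form) :
  labelled_system Sigma le lab R -> lab w (Glob a) -> lab w a.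
Proof.
  intros [[_ [Ty _]] [[Ser _] [_ [_ Sen]]]] H.
  destruct (Ser w) as [v Hv]. destruct (Sen _ _ Hv) as [_ [_ [G _]]].
  destruct (Ty w) as [TS _]. apply (G a (TS _ H)) in H. tauto.
Qed.

(** Dually, H φ ∈ ℓ(w) implies φ ∈ ℓ(w), using an R-predecessor of w. *)
Lemma hist_reflexive (Sigma : fset) (W : Type) (le : W -> W -> Prop)
  (lab : W -> fset) (R : W -> W -> Prop) (w : W) (a : form) :
  labelled_system Sigma le lab R -> lab w (Hist a) -> lab w a.
Proof.
  intros [[_ [Ty _]] [[_ Pre] [_ [_ Sen]]]] H.
  destruct (Pre w) as [v Hv]. destruct (Sen _ _ Hv) as [_ [_ [_ [Hh _]]]].
  destruct (Ty w) as [TS _]. apply (Hh a (TS _ H)) in H. tauto.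
Qed.

Section Quotient.
Variables (W : Type) (le : W -> W -> Prop) (lab : W -> fset).

Definition qcls (w : W) : QW le lab := exist _ (cls le lab w) (ex_intro _ w eq_refl).

Lemma QW_eq (X Y : QW le lab) : proj1_sig X = proj1_sig Y -> X = Y.
Proof.
  destruct X as [P HP], Y as [Q HQ]; simpl; intros ->.
  f_equal; apply proof_irrelevance.
Qed.

Lemma QW_cls (X : QW le lab) (w : W) : proj1_sig X = cls le lab w -> X = qcls w.
Proof. intros H. apply QW_eq. exact H. Qed.

Lemma qcls_surj (X : QW le lab) : exists x, X = qcls x.
Proof. destruct X as [P [x HP]]. exists x. apply QW_cls; exact HP. Qed.

Lemma qcls_eq_iff (x y : W) :
  qcls x = qcls y <-> lab x = lab y /\ Lset le lab x = Lset le lab y.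
Proof.
  split.
  - intros H. assert (Hy : proj1_sig (qcls y) y) by (split; reflexivity).
    rewrite <- H in Hy. exact Hy.
  - intros [H1 H2]. apply QW_eq; simpl. unfold cls, qequiv. rewrite H1, H2. reflexivity.
Qed.

Lemma qlab_qcls (x : W) : qlab (qcls x) = lab x.
Proof.
  apply fset_ext; intro a; split.
  - intros [w [Hw Ha]]. apply QW_cls, qcls_eq_iff in Hw as [E _]. rewrite E; exact Ha.
  - intros Ha. exists x. split; auto.
Qed.

Lemma qle_qcls (x y : W) :
  qle (qcls x) (qcls y) <-> Lset le lab x = Lset le lab y /\ fsubset (lab y) (lab x).
Proof.
  split.
  - intros [w [v [Hw [Hv [HL Hs]]]]].
    apply QW_cls, qcls_eq_iff in Hw as [A1 B1]. apply QW_cls, qcls_eq_iff in Hv as [A2 B2].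
    rewrite A1, A2, B1, B2. auto.
  - intros [HL Hs]. exists x, y. simpl. auto.
Qed.

Lemma qR_iff (R : W -> W -> Prop) (X Y : QW le lab) :
  qR R X Y <-> exists x y, R x y /\ X = qcls x /\ Y = qcls y.
Proof.
  split; intros [x [y [H [Hx Hy]]]]; exists x, y.
  - repeat split; auto; apply QW_cls; auto.
  - subst; repeat split; auto.
Qed.

Lemma qle_refl (X : QW le lab) : qle X X.
Proof. destruct (qcls_surj X) as [x ->]. apply qle_qcls. split; [reflexivity | intros a; auto]. Qed.

Lemma qle_trans (X Y Z : QW le lab) : qle X Y -> qle Y Z -> qle X Z.
Proof.
  destruct (qcls_surj X) as [x ->], (qcls_surj Y) as [y ->], (qcls_surj Z) as [z ->].
  rewrite !qle_qcls. intros [A B] [C D]. split; [congruence | intros a Ha; auto].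
Qed.

Lemma qle_antisym (X Y : QW le lab) : qle X Y -> qle Y X -> X = Y.
Proof.
  destruct (qcls_surj X) as [x ->], (qcls_surj Y) as [y ->].
  rewrite !qle_qcls. intros [A B] [_ D]. apply qcls_eq_iff. split; auto.
  apply fset_ext; intro a; split; auto.
Qed.

Lemma qle_lab (X Y : QW le lab) : qle X Y -> fsubset (qlab Y) (qlab X).
Proof.
  destruct (qcls_surj X) as [x ->], (qcls_surj Y) as [y ->].
  rewrite qle_qcls, !qlab_qcls. intros [_ H]; exact H.
Qed.

(** The L-part of a class; classes with the same L-part form the linear
    components of ≤_Q. *)
Definition qL (X : QW le lab) : fset -> Prop :=
  fun Phi => exists x, X = qcls x /\ Lset le lab x Phi.

Lemma qL_qcls (x : W) : qL (qcls x) = Lset le lab x.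
Proof.
  apply functional_extensionality; intro Phi; apply propositional_extensionality; split.
  - intros [y [E H]]. apply qcls_eq_iff in E as [_ E]. rewrite E; exact H.
  - intros H. exists x; auto.
Qed.

Lemma qle_same_component (X Y : QW le lab) : qle X Y -> qL X = qL Y.
Proof.
  destruct (qcls_surj X) as [x ->], (qcls_surj Y) as [y ->].
  rewrite qle_qcls, !qL_qcls. tauto.
Qed.

(** R ⊆ R_Q ⊆ R⁺_Q on classes: take all four bounds to be the classes. *)
Lemma R_qRplus (R : W -> W -> Prop) (x y : W) : R x y -> qRplus R (qcls x) (qcls y).
Proof.
  intros H. exists (qcls x), (qcls x), (qcls y), (qcls y).
  repeat split; try apply qle_refl; apply qR_iff; exists x, y; auto.
Qed.

Lemma rel_pow_qcls (R : W -> W -> Prop) (n : nat) :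
  forall x v, rel_pow R n x v -> rel_pow (qRplus R) n (qcls x) (qcls v).
Proof.
  induction n as [|n IH]; simpl; intros x v H.
  - subst; reflexivity.
  - destruct H as [y [H1 H2]]. exists (qcls y). split; [apply R_qRplus | apply IH]; auto.
Qed.

Lemma qRplus_converse (R : W -> W -> Prop) :
  @qRplus W le lab (converse R) = converse (qRplus R).
Proof.
  assert (flip : forall S (X Y : QW le lab), qR (converse S) X Y -> qR S Y X).
  { intros S X Y [w [v [H [H1 H2]]]]. exists v, w. auto. }
  apply functional_extensionality; intro X; apply functional_extensionality; intro Y.
  apply propositional_extensionality; unfold converse at 2.
  split; intros [X1 [X2 [Y1 [Y2 [A [B [C [D [E F]]]]]]]]];
    exists Y1, Y2, X1, X2; repeat split; auto; apply flip; auto.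
Qed.

Lemma qRplus_convex (R : W -> W -> Prop) : convex_rel (@qle W le lab) (qRplus R).
Proof.
  split; intros X Y V Z HY HZ H1 H2.
  - destruct HY as [X1 [X2 [Y1 [Y2 [A [B [C [D [E F]]]]]]]]].
    destruct HZ as [X1' [X2' [Z1 [Z2 [A' [B' [C' [D' [E' F']]]]]]]]].
    exists X1', X2, Y1, Z2. repeat split; auto; eapply qle_trans; eauto; eapply qle_trans; eauto.
  - destruct HY as [Y1 [Y2 [X1 [X2 [A [B [C [D [E F]]]]]]]]].
    destruct HZ as [Z1 [Z2 [X1' [X2' [A' [B' [C' [D' [E' F']]]]]]]]].
    exists Y1, Z2, X1', X2. repeat split; auto; eapply qle_trans; eauto; eapply qle_trans; eauto.
Qed.

Section Order.
Hypothesis LL : locally_linear le.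
Hypothesis Mono : forall w v, le w v -> fsubset (lab v) (lab w).

(** Comparable points lie in the same linear component, hence have the same
    L-part. *)
Lemma Lset_comparable (u v : W) : comparable le u v -> Lset le lab u = Lset le lab v.
Proof.
  destruct LL as [_ [E [_ [Es [Et [Ec El]]]]]].
  assert (toE : forall x y, comparable le x y -> E x y).
  { intros x y [H|H]; [apply El | apply Es, El]; auto. }
  intros Huv. apply functional_extensionality; intro Phi; apply propositional_extensionality.
  unfold Lset; split; intros [z [Hz Hl]]; exists z; split; auto; apply Ec.
  - apply Et with u; auto.
  - apply Et with v; auto.
Qed.

Lemma le_qle (u v : W) : le u v -> qle (qcls u) (qcls v).
Proof.
  intros H. apply qle_qcls. split; [apply Lset_comparable; left; auto | apply Mono; auto].
Qed.

Lemma comparable_refl (u : W) : comparable le u u.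
Proof. destruct LL as [[r _] _]. left; apply r. Qed.

(** A ≤_Q-step [x] ≤_Q [y] is realised by u ≤ y for some u ∈ [x]: the label
    ℓ(x) occurs in L(y) at some u comparable to y; if y ≤ u then ℓ(u) ⊆ ℓ(y)
    forces ℓ(y) = ℓ(x), i.e. [x] = [y]. *)
Lemma qle_lift_down (x y : W) :
  qle (qcls x) (qcls y) -> exists u, qcls x = qcls u /\ le u y.
Proof.
  rewrite qle_qcls. intros [HL Hs].
  assert (Hx : Lset le lab x (lab x)) by (exists x; split; auto; apply comparable_refl).
  rewrite HL in Hx. destruct Hx as [u [[Hu|Hu] Hl]].
  - exists u. split; auto. apply qcls_eq_iff. split; [symmetry; auto|].
    rewrite HL. symmetry. apply Lset_comparable. left; auto.
  - exists y. split; [|destruct LL as [[r _] _]; apply r].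
    apply qcls_eq_iff. split; auto.
    apply fset_ext. intro a. split; auto. intro Ha. rewrite <- Hl in Ha. apply (Mono Hu Ha).
Qed.

Lemma qle_lift_up (x y : W) :
  qle (qcls x) (qcls y) -> exists u, qcls y = qcls u /\ le x u.
Proof.
  rewrite qle_qcls. intros [HL Hs].
  assert (Hy : Lset le lab y (lab y)) by (exists y; split; auto; apply comparable_refl).
  rewrite <- HL in Hy. destruct Hy as [u [[Hu|Hu] Hl]].
  - exists x. split; [|destruct LL as [[r _] _]; apply r].
    apply qcls_eq_iff. split; auto.
    apply fset_ext. intro a. split; auto. intro Ha. rewrite <- Hl. apply (Mono Hu Ha).
  - exists u. split; auto. apply qcls_eq_iff. split; [symmetry; auto|].
    rewrite <- HL. apply Lset_comparable. left; auto.
Qed.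

Lemma same_component_comparable (X Y : QW le lab) : qL X = qL Y -> qle X Y \/ qle Y X.
Proof.
  destruct (qcls_surj X) as [x ->], (qcls_surj Y) as [y ->].
  rewrite !qL_qcls. intros C.
  assert (Hx : Lset le lab x (lab x)) by (exists x; split; auto; apply comparable_refl).
  rewrite C in Hx. destruct Hx as [u [[Hu|Hu] Hl]]; [left | right]; apply qle_qcls.
  - split; auto. intros a Ha. rewrite <- Hl. apply (Mono Hu Ha).
  - split; auto. intros a Ha. rewrite <- Hl in Ha. apply (Mono Hu Ha).
Qed.

Lemma comparable_below (X Y Z : QW le lab) : qle X Z -> qle Y Z -> qle X Y \/ qle Y X.
Proof.
  intros H1 H2. apply same_component_comparable.
  rewrite (qle_same_component H1), (qle_same_component H2). reflexivity.
Qed.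

Lemma comparable_above (X Y Z : QW le lab) : qle Z X -> qle Z Y -> qle X Y \/ qle Y X.
Proof.
  intros H1 H2. apply same_component_comparable.
  rewrite <- (qle_same_component H1), <- (qle_same_component H2). reflexivity.
Qed.

Lemma quotient_locally_linear : locally_linear (@qle W le lab).
Proof.
  split; [split; [|split] |].
  - apply qle_refl.
  - apply qle_antisym.
  - apply qle_trans.
  - exists (fun X Y => qL X = qL Y). repeat split.
    + intros X Y H; symmetry; exact H.
    + intros X Y Z; apply eq_trans.
    + apply same_component_comparable.
    + apply qle_same_component.
Qed.

Section Relation.
Variable R : W -> W -> Prop.

(** Given X ≤_Q X' R⁺_Q Y', either
    X is already above the lower bound X1 of the witness for X', or X lies
    below X1 and the forth-down square of R at a representative gives an
    R-successor [c] of X which is comparable with Y'. *)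
Lemma qRplus_forth_down : forth_down le R -> forth_down (@qle W le lab) (qRplus R).
Proof.
  intros FD X X' Y' HX [X1 [X2 [Y1 [Y2 [A [B [C [D [E F]]]]]]]]].
  destruct (comparable_below A HX) as [G|G].
  - exists Y'. split; [|apply qle_refl].
    exists X1, X2, Y1, Y2. repeat split; auto. eapply qle_trans; eauto.
  - apply qR_iff in F as [a [b [Rab [-> ->]]]]. destruct (qcls_surj X) as [x ->].
    destruct (qle_lift_down G) as [u [Eu Hu]].
    destruct (FD _ _ _ Hu Rab) as [c [Ruc Hc]].
    destruct (comparable_below D (le_qle Hc)) as [K|K].
    + exists Y'. split; [|apply qle_refl].
      exists (qcls x), X2, Y1, (qcls c). repeat split; auto.
      * apply qle_refl.
      * apply qle_trans with X'; auto.
      * apply qR_iff. exists u, c. auto.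
    + exists (qcls c). split; auto. rewrite Eu. apply R_qRplus; auto.
Qed.

Lemma qRplus_forth_up : forth_up le R -> forth_up (@qle W le lab) (qRplus R).
Proof.
  intros FU X X' Y HX [X1 [X2 [Y1 [Y2 [A [B [C [D [E F]]]]]]]]].
  destruct (comparable_above HX B) as [G|G].
  - exists Y. split; [|apply qle_refl].
    exists X1, X2, Y1, Y2. repeat split; auto. eapply qle_trans; eauto.
  - apply qR_iff in E as [a [b [Rab [-> ->]]]]. destruct (qcls_surj X') as [x ->].
    destruct (qle_lift_up G) as [u [Eu Hu]].
    destruct (FU _ _ _ Hu Rab) as [d [Rud Hd]].
    destruct (comparable_above C (le_qle Hd)) as [K|K].
    + exists (qcls d). split; auto. rewrite Eu. apply R_qRplus; auto.
    + exists Y. split; [|apply qle_refl].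
      exists X1, (qcls x), (qcls d), Y2. repeat split; auto.
      * apply qle_trans with X; auto.
      * apply qle_refl.
      * apply qR_iff. exists u, d. auto.
Qed.

(** If X R⁺_Q Y then some representatives of X have R-successors whose labels
    contain ℓ_Q(Y), respectively are contained in it: realise the witnesses
    X ≤_Q X2 R_Q Y1 ≤_Q Y and X1 ≤_Q X, X1 R_Q Y2 ≥_Q Y in W by lifting the
    ≤_Q-steps and applying forth-down, respectively forth-up, confluence. *)
Lemma qRplus_successor_bounds (X Y : QW le lab) :
  forth_down le R -> forth_up le R -> qRplus R X Y ->
  (exists u c, qlab X = lab u /\ R u c /\ fsubset (qlab Y) (lab c)) /\
  (exists u f, qlab X = lab u /\ R u f /\ fsubset (lab f) (qlab Y)).
Proof.
  intros FD FU [X1 [X2 [Y1 [Y2 [A [B [C [D [E F]]]]]]]]].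
  destruct (qcls_surj X) as [x ->].
  apply qR_iff in E as [a [b [Rab [-> ->]]]].
  apply qR_iff in F as [d [e [Rde [-> ->]]]].
  split.
  - destruct (qle_lift_down B) as [u [Eu Hu]].
    destruct (FD _ _ _ Hu Rab) as [c [Ruc Hc]].
    exists u, c. rewrite Eu, qlab_qcls. repeat split; auto.
    intros a' Ha'. apply (Mono Hc). rewrite <- qlab_qcls. apply (qle_lab C); auto.
  - destruct (qle_lift_up A) as [u [Eu Hu]].
    destruct (FU _ _ _ Hu Rde) as [f [Ruf Hf]].
    exists u, f. rewrite Eu, qlab_qcls. repeat split; auto.
    intros a' Ha'. apply (qle_lab D). rewrite qlab_qcls. apply (Mono Hf); auto.
Qed.

End Relation.
End Order.

Lemma quotient_labelled_space (Sigma : fset) :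
  labelled_space Sigma le lab -> labelled_space Sigma (@qle W le lab) (@qlab W le lab).
Proof.
  intros [LL [Ty [Mo [Im Co]]]].
  split; [apply quotient_locally_linear; auto | split; [| split; [| split]]].
  - intros X. destruct (qcls_surj X) as [x ->]. rewrite qlab_qcls. apply Ty.
  - intros X Y. apply qle_lab.
  - intros X a b HS. destruct (qcls_surj X) as [x ->]. rewrite qlab_qcls. intros HX.
    destruct (Im x a b HS HX) as [v [A B]]. exists (qcls v).
    rewrite qlab_qcls. split; auto. apply le_qle; auto.
  - intros X a b. destruct (qcls_surj X) as [x ->]. rewrite qlab_qcls. intros HX.
    destruct (Co x a b HX) as [v [A B]]. exists (qcls v).
    rewrite qlab_qcls. split; auto. apply le_qle; auto.
Qed.

Lemma quotient_fully_confluent (R : W -> W -> Prop) :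
  locally_linear le -> (forall w v, le w v -> fsubset (lab v) (lab w)) ->
  fully_confluent le R -> fully_confluent (@qle W le lab) (qRplus R).
Proof.
  intros LL Mono FC. apply fully_confluent_iff in FC as [FD [FU [BD BU]]].
  apply fully_confluent_iff. rewrite <- (qRplus_converse R).
  repeat split; [apply qRplus_forth_down | apply qRplus_forth_up
                | apply qRplus_forth_down | apply qRplus_forth_up]; auto.
Qed.

(** Sensibility of R⁺_Q: combine the successor bounds for R (from X) with
    those for the converse of R (from Y) in [sensible_pair_sandwich]. *)
Lemma quotient_sensible (Sigma : fset) (R : W -> W -> Prop) :
  labelled_system Sigma le lab R -> sensible_rel Sigma (@qlab W le lab) (qRplus R).
Proof.
  intros Sys X Y HXY.
  pose proof Sys as [[LL [_ [Mono _]]] [_ [FC [_ Sen]]]].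
  apply fully_confluent_iff in FC as [FD [FU [BD BU]]].
  destruct (qRplus_successor_bounds LL Mono FD FU HXY)
    as [[u [c [Eu [Ruc Hc]]]] [u' [f [Eu' [Ruf Hf]]]]].
  assert (HYX : @qRplus W le lab (converse R) Y X) by (rewrite qRplus_converse; exact HXY).
  destruct (qRplus_successor_bounds LL Mono BD BU HYX)
    as [[v [c' [Ev [Rvc Hc']]]] [v' [f' [Ev' [Rvf Hf']]]]].
  apply (sensible_pair_sandwich (C := lab c) (F := lab f) (C' := lab c') (F' := lab f')).
  - destruct (qcls_surj X) as [x ->]. rewrite qlab_qcls. intros a. apply (glob_reflexive x a Sys).
  - destruct (qcls_surj Y) as [y ->]. rewrite qlab_qcls. intros a. apply (hist_reflexive y a Sys).
  - rewrite Eu. apply Sen; auto.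
  - exact Hc.
  - rewrite Eu'. apply Sen; auto.
  - exact Hf.
  - rewrite Ev. apply Sen; auto.
  - exact Hc'.
  - rewrite Ev'. apply Sen; auto.
  - exact Hf'.
Qed.

Lemma quotient_omega_sensible (Sigma : fset) (R : W -> W -> Prop) :
  omega_sensible Sigma lab R -> omega_sensible Sigma (@qlab W le lab) (qRplus R).
Proof.
  intros [OG [OH [OU OS]]]. split; [|split; [|split]]; intros X.
  all: destruct (qcls_surj X) as [x ->]; rewrite qlab_qcls.
  - intros a HS HX. destruct (OG x a HS HX) as [n [v [Hp Hv]]].
    exists n, (qcls v). rewrite qlab_qcls. split; auto. apply rel_pow_qcls; auto.
  - intros a HS HX. destruct (OH x a HS HX) as [n [v [Hp Hv]]].
    exists n, (qcls v). rewrite qlab_qcls. split; auto. apply rel_pow_qcls; auto.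
  - intros a b HX. destruct (OU x a b HX) as [n [v [Hp Hv]]].
    exists n, (qcls v). rewrite qlab_qcls. split; auto. apply rel_pow_qcls; auto.
  - intros a b HX. destruct (OS x a b HX) as [n [v [Hp Hv]]].
    exists n, (qcls v). rewrite qlab_qcls. split; auto. apply rel_pow_qcls; auto.
Qed.

Lemma quotient_labelled_system (Sigma : fset) (R : W -> W -> Prop) :
  labelled_system Sigma le lab R ->
  labelled_system Sigma (@qle W le lab) (@qlab W le lab) (qRplus R).
Proof.
  intros Sys. pose proof Sys as [Sp [[Ser Pre] [FC _]]].
  pose proof Sp as [LL [_ [Mono _]]].
  split; [apply quotient_labelled_space; exact Sp|].
  split; [split|split; [|split]].
  - intros X. destruct (qcls_surj X) as [x ->]. destruct (Ser x) as [v Hv].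
    exists (qcls v). apply R_qRplus; auto.
  - intros X. destruct (qcls_surj X) as [x ->]. destruct (Pre x) as [v Hv].
    exists (qcls v). apply R_qRplus; auto.
  - apply quotient_fully_confluent; auto.
  - apply qRplus_convex.
  - apply quotient_sensible; exact Sys.
Qed.

End Quotient.

Theorem lemma6p3 (Sigma : fset) (W : Type) (le : W -> W -> Prop)
  (lab : W -> fset) (R : W -> W -> Prop) :
  subformula_closed Sigma ->
  labelled_system Sigma le lab R ->
  omega_sensible Sigma lab R ->
  omega_sensible Sigma (@qlab W le lab) (@qRplus W le lab R) /\
  quasimodel Sigma (@qle W le lab) (@qlab W le lab) (@qRplus W le lab R).
Proof.
  intros _ Sys Om.
  pose proof (quotient_omega_sensible le Om) as OmQ.
  split; [exact OmQ|].
  split; [apply quotient_labelled_system; exact Sys | exact OmQ].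
Qed.
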